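(* Let $\mathcal B$ be a finite set of finite Cornish algebras of type $F=F^+\,\dot\cup\,F^-$ and let $\mathcal Y=\{D(\mathbf A)\mid\mathbf A\in\mathcal B\}$. Then the algebras in $\mathcal B$ are semi-primal and share a common ternary discriminator term provided: (i) each $\mathbb X\in\mathcal Y$ has no non-empty proper substructures; (ii) the set $F^-$ is non-empty; (iii) there exists a unary term $t$ in the signature $F$ such that $t^{\mathbb X}$ is constant for all $\mathbb X\in\mathcal Y$.
   Context: A Cornish algebra of type $F$: a bounded distributive lattice with unary operations $f^{\mathbf A}$ ($f\in F$), an endomorphism for $f\in F^+$ and a dual endomorphism for $f\in F^-$. A Cornish space of type $F$: a Priestley space with unary operations $f^{\mathbb X}$, continuous order-preserving for $f\in F^+$ and continuous order-reversing for $f\in F^-$. A substructure is a closed subset closed under all $f^{\mathbb X}$. $D(\mathbf A)$: the set of bounded-lattice homomorphisms from the lattice reduct of $\mathbf A$ to $\mathbf 2$, ordered pointwise, topology from $\{0,1\}^A$, with $f^{D(\mathbf A)}(x)=x\circ f^{\mathbf A}$ for $f\in F^+$ and $c\circ x\circ f^{\mathbf A}$ for $f\in F^-$ ($c$ Boolean complement). A unary term is a finite composite of symbols of $F$, interpreted in $\mathbb X$ as the corresponding composite of the maps $f^{\mathbb X}$. Semi-primal: finite algebra with a majority term such that every subalgebra of $\mathbf A^2$ is a product of subalgebras or the graph of the identity on a subalgebra. Sharing a common ternary discriminator term: one ternary term $t$ induces on each algebra the map $\tau(x,y,z)=x$ if $x\ne y$, $=z$ if $x=y$. *)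

From HB Require Import structures.
From mathcomp Require Import all_boot all_order.
Set Implicit Arguments. Unset Strict Implicit. Unset Printing Implicit Defensive.
Import Order.Theory.
Local Open Scope order_scope.

Section Cornish.
Variable F : Type.
Variable pos : F -> bool.   (* pos f = true iff f \in F^+, false iff f \in F^- *)

Section Alg.
Context {d : Order.disp_t} {L : finTBDistrLatticeType d}.
Variable op : F -> L -> L.

Definition is_cornish : Prop :=
  forall f, if pos f then
    [/\ forall a b, op f (a `&` b) = op f a `&` op f b,
        forall a b, op f (a `|` b) = op f a `|` op f b,
        op f \bot = \bot & op f \top = \top]
  else
    [/\ forall a b, op f (a `&` b) = op f a `|` op f b,
        forall a b, op f (a `|` b) = op f a `&` op f b,
        op f \bot = \top & op f \top = \bot].

Inductive term (V : Type) : Type :=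
  | tVar of V | tBot | tTop
  | tMeet of term V & term V | tJoin of term V & term V
  | tOp of F & term V.

Fixpoint teval (V : Type) (e : V -> L) (t : term V) : L :=
  match t with
  | tVar v => e v
  | tBot => \bot
  | tTop => \top
  | tMeet t1 t2 => teval e t1 `&` teval e t2
  | tJoin t1 t2 => teval e t1 `|` teval e t2
  | tOp f t1 => op f (teval e t1)
  end.

Definition env3 (x y z : L) : 'I_3 -> L :=
  fun i => match val i with 0 => x | 1 => y | _ => z end.

Definition is_majority_term (m : term 'I_3) : Prop :=
  forall x y : L, [/\ teval (env3 x x y) m = x,
                      teval (env3 x y x) m = x &
                      teval (env3 y x x) m = x].

Definition is_discriminator_term (t : term 'I_3) : Prop :=
  forall x y z : L, teval (env3 x y z) t = if x == y then z else x.

Definition subalg (S : {set L}) : Prop :=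
  [/\ \bot \in S, \top \in S,
      forall a b, a \in S -> b \in S -> a `&` b \in S,
      forall a b, a \in S -> b \in S -> a `|` b \in S &
      forall f a, a \in S -> op f a \in S].

Definition subalg2 (S : {set L * L}) : Prop :=
  [/\ (\bot, \bot) \in S, (\top, \top) \in S,
      forall p q, p \in S -> q \in S -> (p.1 `&` q.1, p.2 `&` q.2) \in S,
      forall p q, p \in S -> q \in S -> (p.1 `|` q.1, p.2 `|` q.2) \in S &
      forall f p, p \in S -> (op f p.1, op f p.2) \in S].

Definition semi_primal : Prop :=
  (exists m, is_majority_term m) /\
  forall S, subalg2 S ->
    (exists S1 S2, [/\ subalg S1, subalg S2 & S = setX S1 S2]) \/
    (exists S1, subalg S1 /\ S = [set (a, a) | a in S1]).

Definition dual_space : {set {ffun L -> bool}} :=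
  [set x : {ffun L -> bool} |
    [&& [forall a, forall b, x (a `&` b) == x a && x b],
        [forall a, forall b, x (a `|` b) == x a || x b],
        x \bot == false & x \top == true]].

Definition dual_op (f : F) (x : {ffun L -> bool}) : {ffun L -> bool} :=
  [ffun a => if pos f then x (op f a) else ~~ x (op f a)].

(* substructures of D(A); D(A) is finite, hence discrete, so every subset
   is closed *)
Definition substructure (Y : {set {ffun L -> bool}}) : Prop :=
  Y \subset dual_space /\ forall f x, x \in Y -> dual_op f x \in Y.

Definition no_proper_nonempty_substructure : Prop :=
  forall Y, substructure Y -> Y = set0 \/ Y = dual_space.

(* unary term w = [:: f1; ...; fn] interpreted as f1 o ... o fn *)
Definition uterm_dual (w : seq F) (x : {ffun L -> bool}) : {ffun L -> bool} :=
  foldr dual_op x w.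

Definition uterm_constant_on_dual (w : seq F) : Prop :=
  forall x y, x \in dual_space -> y \in dual_space ->
    uterm_dual w x = uterm_dual w y.

End Alg.
End Cornish.

(* A Priestley dual point x of D(A) sees the unary term w as
   x (w^A a) = (w^X x) a, up to a complement fixed by the parity of the
   number of symbols of F^- in w.  Hence if w^X is constant, w^A takes only
   the values 0 and 1.  Since D(A) has no proper substructures, every dual
   point lies in the orbit of the constant w^X x, so any two distinct
   elements of A are told apart by a word s w with 0/1 values.  Finitely many
   such words separate all pairs of all algebras; the meet of the
   corresponding equality tests (x_s /\ y_s) \/ (g x_s /\ g y_s), with g in
   F^-, is a term that is 1 on the diagonal and 0 off it, which yields the
   discriminator.  The same words show that a non-diagonal subalgebra of A^2
   contains (1,0) and (0,1), hence is a product. *)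
From mathcomp Require Import all_boot all_order boolp.
Set Implicit Arguments. Unset Strict Implicit. Unset Printing Implicit Defensive.
Import Order.Theory.
Local Open Scope order_scope.

Definition is_bound {d : Order.disp_t} {L : finTBDistrLatticeType d} (u : L) :=
  (u == \bot) || (u == \top).

Section DualSpace.
Context {d : Order.disp_t} {L : finTBDistrLatticeType d}.

Lemma in_dual_spaceP (x : {ffun L -> bool}) :
  reflect [/\ forall a b, x (a `&` b) = x a && x b,
              forall a b, x (a `|` b) = x a || x b,
              x \bot = false & x \top = true]
          (x \in dual_space).
Proof.
rewrite inE; apply: (iffP and4P).
  case=> /forallP hI /forallP hU /eqP h0 /eqP h1; split=> // a b.
    by apply/eqP; have /forallP := hI a.
  by apply/eqP; have /forallP := hU a.
case=> hI hU h0 h1; split; try exact/eqP.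
  by apply/forallP => a; apply/forallP => b; apply/eqP.
by apply/forallP => a; apply/forallP => b; apply/eqP.
Qed.

Lemma join_prime_below (a b : L) : ~~ (a <= b) ->
  exists j, [/\ j <= a, ~~ (j <= b) &
                forall u v, j <= u `|` v -> (j <= u) || (j <= v)].
Proof.
move=> nab; pose P e := (e <= a) && ~~ (e <= b).
have Pa : P a by rewrite /P lexx.
(* j is minimal in P, measured by its number of strict lower bounds. *)
have [j /andP[ja njb] jmin] := arg_minnP (fun e => #|[set y | y < e]|) Pa.
have below e : e < j -> e <= a -> e <= b.
  move=> ej ea; apply/negPn/negP => neb.
  have := jmin e (introT andP (conj ea neb)); rewrite leqNgt => /negP; apply.
  apply: proper_card; apply/properP; split.
    by apply/subsetP => y; rewrite !inE => /lt_trans; apply.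
  by exists e; rewrite !inE ?ej ?ltxx.
have meet_lt u : ~~ (j <= u) -> j `&` u < j.
  by move=> nju; rewrite lt_neqAle leIl andbT; apply: contra nju => /eqP/meet_idPl.
exists j; split => // u v juv; apply/negPn/negP; rewrite negb_or => /andP[nju njv].
case/negP: njb; rewrite -(meet_idPl juv) meetUr leUx.
by rewrite !below ?meet_lt ?(le_trans (leIl _ _) ja).
Qed.

Lemma dual_space_separates_le (a b : L) : ~~ (a <= b) ->
  exists2 x, x \in dual_space & x a && ~~ x b.
Proof.
case/join_prime_below => j [ja njb jprime].
exists [ffun e => j <= e]; last by rewrite !ffunE ja njb.
apply/in_dual_spaceP; split=> [u v|u v||]; rewrite !ffunE ?lexI ?lex1 //.
- apply/idP/orP => [/jprime/orP //|[] ju]; apply: le_trans ju _.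
    exact: leUl.
  exact: leUr.
- by apply: contraNF njb => /le_trans; apply; apply: le0x.
Qed.

Lemma dual_space_separates (a b : L) : a != b ->
  exists2 x, x \in dual_space & x a != x b.
Proof.
rewrite eq_le negb_and => /orP[] /dual_space_separates_le[x xD /andP[xa xb]];
  by exists x => //; rewrite xa (negbTE xb).
Qed.

Lemma dual_constant_is_bound (v : L) :
  (forall x y, x \in dual_space -> y \in dual_space -> x v = y v) -> is_bound v.
Proof.
move=> const; apply/norP => -[nv0 nv1].
have [x xD /andP[_ xv]] : exists2 x, x \in dual_space & x \top && ~~ x v.
  by apply: dual_space_separates_le; rewrite le1x.
have [y yD /andP[yv _]] : exists2 y, y \in dual_space & y v && ~~ y \bot.
  by apply: dual_space_separates_le; rewrite lex0.
by move: xv; rewrite (const x y xD yD) yv.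
Qed.

End DualSpace.

Section CornishAlgebra.
Variables (F : Type) (pos : F -> bool).
Context {d : Order.disp_t} {L : finTBDistrLatticeType d}.
Variable op : F -> L -> L.

(* The word [f1; ...; fn] acts on A as fn o ... o f1, mirroring uterm_dual. *)
Definition uterm_alg (w : seq F) (a : L) : L := foldl (fun b f => op f b) a w.

Lemma uterm_dual_cat s w x :
  uterm_dual pos op (s ++ w) x = uterm_dual pos op s (uterm_dual pos op w x).
Proof. by rewrite /uterm_dual foldr_cat. Qed.

Lemma uterm_alg_dual w (x : {ffun L -> bool}) a :
  x (uterm_alg w a) = uterm_dual pos op w x a (+) odd (count (predC pos) w).
Proof.
elim: w a => [|f w IH] a /=; first by rewrite addbF.
by rewrite IH ffunE oddD addbA; case: (pos f); rewrite /= ?addbT ?negbK ?addbF.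
Qed.

Lemma uterm_constant_on_dual_cat s w :
  uterm_constant_on_dual pos op w -> uterm_constant_on_dual pos op (s ++ w).
Proof. by move=> cw x y xD yD; rewrite !uterm_dual_cat (cw x y). Qed.

Lemma uterm_alg_is_bound w a :
  uterm_constant_on_dual pos op w -> is_bound (uterm_alg w a).
Proof.
by move=> cw; apply: dual_constant_is_bound => x y xD yD; rewrite !uterm_alg_dual (cw x y).
Qed.

Hypothesis opC : is_cornish pos op.

Lemma dual_op_in f x : x \in dual_space -> dual_op pos op f x \in dual_space.
Proof.
move=> /in_dual_spaceP[xI xU x0 x1]; apply/in_dual_spaceP; rewrite /dual_op.
have := opC f; case: (pos f) => -[fI fU f0 f1];
  by split=> *; rewrite !ffunE ?fI ?fU ?f0 ?f1 ?xI ?xU ?x0 ?x1 ?negb_and ?negb_or.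
Qed.

Lemma uterm_dual_in w x : x \in dual_space -> uterm_dual pos op w x \in dual_space.
Proof. by move=> xD; elim: w => //= f w; apply: dual_op_in. Qed.

Hypothesis op_simple : no_proper_nonempty_substructure pos op.

Lemma dual_orbit c y : c \in dual_space -> y \in dual_space ->
  exists s, uterm_dual pos op s c = y.
Proof.
move=> cD yD; pose O := [set z in dual_space | `[< exists s, uterm_dual pos op s c = z >]].
have cO : c \in O by rewrite [_ \in O]inE cD; apply/asboolP; exists [::].
have Osub : substructure pos op O.
  split=> [|f z]; first by apply/subsetP => z; rewrite [_ \in O]inE => /andP[].
  rewrite ![_ \in O]inE => /andP[zD /asboolP[s zE]]; rewrite dual_op_in //=.
  by apply/asboolP; exists (f :: s); rewrite /= zE.
have [O0|OD] := op_simple Osub; first by rewrite O0 inE in cO.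
by move: yD; rewrite -OD [_ \in O]inE => /andP[_ /asboolP].
Qed.

Lemma separating_word w a b : a != b ->
  exists s, uterm_alg (s ++ w) a != uterm_alg (s ++ w) b.
Proof.
move=> nab; have [y yD yab] := dual_space_separates nab.
have [s sy] := dual_orbit (uterm_dual_in w yD) yD.
exists s; apply: contraNneq yab => eq_ab; apply/eqP.
by move: (congr1 y eq_ab); rewrite !uterm_alg_dual uterm_dual_cat sy => /addIb.
Qed.

End CornishAlgebra.

Definition tx {F : Type} : term F 'I_3 := tVar F (Ordinal (isT : 0 < 3)).
Definition ty {F : Type} : term F 'I_3 := tVar F (Ordinal (isT : 1 < 3)).
Definition tz {F : Type} : term F 'I_3 := tVar F (Ordinal (isT : 2 < 3)).

Definition tmajority {F : Type} : term F 'I_3 :=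
  tJoin (tJoin (tMeet tx ty) (tMeet ty tz)) (tMeet tz tx).

Definition tcomp {F V : Type} (w : seq F) (t : term F V) : term F V :=
  foldl (fun t f => tOp f t) t w.

Definition teq {F V : Type} (g : F) (p q : term F V) : term F V :=
  tJoin (tMeet p q) (tMeet (tOp g p) (tOp g q)).

Definition teq_words {F : Type} (g : F) (ws : seq (seq F)) : term F 'I_3 :=
  foldr (fun s E => tMeet (teq g (tcomp s tx) (tcomp s ty)) E) (tTop F 'I_3) ws.

Definition tdiscriminator {F : Type} (g : F) (E : term F 'I_3) : term F 'I_3 :=
  tJoin (tMeet E tz) (tMeet (tOp g E) tx).

Section Terms.
Variable F : Type.
Context {d : Order.disp_t} {L : finTBDistrLatticeType d}.
Variable op : F -> L -> L.

Lemma tmajorityP : is_majority_term op tmajority.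
Proof.
move=> a b; rewrite /= /env3 /= meetxx; split.
- by rewrite meetKU (meetC b) meetKU.
- by rewrite (meetC b) joinxx joinC meetKU.
- by rewrite -joinA (joinC a) joinA (meetC b) joinxx joinC meetKU.
Qed.

Lemma teval_tcomp V (e : V -> L) w t :
  teval op e (tcomp w t) = uterm_alg op w (teval op e t).
Proof. by elim: w t => [|f w IH] t //=; rewrite IH. Qed.

Variable g : F.
Hypotheses (g0 : op g \bot = \top) (g1 : op g \top = \bot).

Lemma bound_eq_test (u v : L) : is_bound u -> is_bound v ->
  (u `&` v) `|` (op g u `&` op g v) = if u == v then \top else \bot.
Proof.
case/orP=> /eqP-> /orP[]/eqP->;
  rewrite ?eqxx ?g0 ?g1 ?meetxx ?meet0x ?meetx0 ?joinx0 ?join0x //; by case: eqP.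
Qed.

Lemma teval_teq_words ws :
  (forall c, all (fun s => is_bound (uterm_alg op s c)) ws) ->
  (forall a b, a != b -> has (fun s => uterm_alg op s a != uterm_alg op s b) ws) ->
  forall a b c, teval op (env3 a b c) (teq_words g ws) = if a == b then \top else \bot.
Proof.
move=> ws_bound ws_sep a b c; case: eqVneq => [<-|nab].
  have := ws_bound a; elim: ws {ws_sep ws_bound} => //= s ws IH /andP[sa /IH->].
  by rewrite !teval_tcomp bound_eq_test // eqxx meetx1.
have := ws_sep a b nab; have := ws_bound b; have := ws_bound a.
elim: ws {ws_sep ws_bound} => //= s ws IH /andP[sa wsa] /andP[sb wsb] /orP[sab|].
  by rewrite !teval_tcomp bound_eq_test // (negbTE sab) meet0x.
by move=> /(IH wsa wsb) ->; rewrite meetx0.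
Qed.

Lemma tdiscriminatorP E :
  (forall a b c, teval op (env3 a b c) E = if a == b then \top else \bot) ->
  is_discriminator_term op (tdiscriminator g E).
Proof.
move=> E_eq a b c /=; rewrite E_eq.
by case: eqVneq => _; rewrite ?g0 ?g1 meet1x meet0x ?joinx0 ?join0x.
Qed.

End Terms.

Section Subalgebras.
Variable F : Type.
Context {d : Order.disp_t} {L : finTBDistrLatticeType d}.
Variable op : F -> L -> L.
Implicit Type T : {set L * L}.

Lemma subalg2_uterm_alg T s p : subalg2 op T -> p \in T ->
  (uterm_alg op s p.1, uterm_alg op s p.2) \in T.
Proof.
case=> _ _ _ _ TF; elim: s p => [|f s IH] [a b] abT //=.
exact: (IH (op f a, op f b) (TF f _ abT)).
Qed.

Lemma subalg_proj T (b : bool) : subalg2 op T ->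
  subalg op [set (if b then p.1 else p.2) | p in T].
Proof.
case=> T0 T1 TI TU TF; split.
- by apply/imsetP; exists (\bot, \bot); case: b.
- by apply/imsetP; exists (\top, \top); case: b.
- move=> _ _ /imsetP[p pT ->] /imsetP[q qT ->]; apply/imsetP.
  by exists (p.1 `&` q.1, p.2 `&` q.2); [exact: TI | case: b].
- move=> _ _ /imsetP[p pT ->] /imsetP[q qT ->]; apply/imsetP.
  by exists (p.1 `|` q.1, p.2 `|` q.2); [exact: TU | case: b].
- move=> f _ /imsetP[p pT ->]; apply/imsetP.
  by exists (op f p.1, op f p.2); [exact: TF | case: b].
Qed.

Lemma subalg2_diag T : (forall p, p \in T -> p.1 = p.2) ->
  T = [set (a, a) | a in [set p.1 | p in T]].
Proof.
move=> diagT; apply/setP => -[a b].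
apply/idP/imsetP => [abT|[_ /imsetP[p pT ->] [-> ->]]].
  have /= eab := diagT _ abT; subst b.
  by exists a => //; apply/imsetP; exists (a, a).
by rewrite {2}(diagT p pT) -surjective_pairing.
Qed.

Lemma subalg2_setX T : subalg2 op T -> (\top, \bot) \in T -> (\bot, \top) \in T ->
  T = setX [set p.1 | p in T] [set p.2 | p in T].
Proof.
case=> _ _ TI TU _ T10 T01; apply/setP => -[a b]; rewrite in_setX /=.
apply/idP/andP => [abT|[/imsetP[p pT ->] /imsetP[q qT ->]]].
  by split; apply/imsetP; exists (a, b).
have := TU _ _ (TI _ _ pT T10) (TI _ _ qT T01).
by rewrite /= !meetx1 !meetx0 joinx0 join0x.
Qed.

Variable g : F.
Hypotheses (g0 : op g \bot = \top) (g1 : op g \top = \bot).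

Lemma subalg2_corners T p s : subalg2 op T -> p \in T ->
  is_bound (uterm_alg op s p.1) -> is_bound (uterm_alg op s p.2) ->
  uterm_alg op s p.1 != uterm_alg op s p.2 ->
  (\top, \bot) \in T /\ (\bot, \top) \in T.
Proof.
move=> TS pT; have negT u v : (u, v) \in T -> (op g u, op g v) \in T.
  by case: TS => _ _ _ _ TF /(TF g).
move=> /orP[]/eqP e1 /orP[]/eqP e2; have := subalg2_uterm_alg s TS pT;
  rewrite e1 e2 ?eqxx // => sT _; by split=> //; move/negT: sT; rewrite g0 g1.
Qed.

Lemma semi_primal_of_bound_separation :
  (forall a b, a != b -> exists s,
     [/\ is_bound (uterm_alg op s a), is_bound (uterm_alg op s b)
       & uterm_alg op s a != uterm_alg op s b]) ->
  semi_primal op.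
Proof.
move=> bound_sep; split; first by exists tmajority; exact: tmajorityP.
move=> T TS; have [diagT|] := boolP [forall p in T, p.1 == p.2].
  right; exists [set p.1 | p in T]; split; first exact: (subalg_proj true TS).
  by apply: subalg2_diag => p pT; apply/eqP; move/forall_inP: diagT; apply.
case/forall_inPn => p pT np; have [s [sa sb sab]] := bound_sep _ _ np.
have [T10 T01] := subalg2_corners TS pT sa sb sab.
left; exists [set p.1 | p in T], [set p.2 | p in T]; split.
- exact: (subalg_proj true TS).
- exact: (subalg_proj false TS).
- exact: subalg2_setX.
Qed.

End Subalgebras.

Local Close Scope order_scope.

Theorem corollary5p12 (F : Type) (pos : F -> bool) (I : finType)
  (d : I -> Order.disp_t) (L : forall i : I, finTBDistrLatticeType (d i))
  (op : forall i : I, F -> L i -> L i)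
  (Hcornish : forall i, is_cornish pos (op i))
  (H1 : forall i, no_proper_nonempty_substructure pos (op i))
  (H2 : exists f : F, pos f = false)
  (H3 : exists w : seq F, 0 < size w /\
          forall i, uterm_constant_on_dual pos (op i) w) :
  (forall i, semi_primal (op i)) /\
  (exists t : term F 'I_3, forall i, is_discriminator_term (op i) t).
Proof.
have [g gneg] := H2; have [w [_ w_const]] := H3.
have g01 i : (op i g \bot = \top /\ op i g \top = \bot)%O.
  by have := Hcornish i g; rewrite gneg => -[].
have word_bound i s a : is_bound (uterm_alg (op i) (s ++ w) a).
  exact/uterm_alg_is_bound/uterm_constant_on_dual_cat.
pose pairs i := (L i * L i)%type.
have /fin_all_exists[sep sepP] (p : {i : I & pairs i}) : exists s,
    (tagged p).1 != (tagged p).2 ->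
    uterm_alg (op (tag p)) (s ++ w) (tagged p).1 !=
    uterm_alg (op (tag p)) (s ++ w) (tagged p).2.
  case: p => i [a b]; have [<-|nab] := eqVneq a b; first by exists [::]; rewrite eqxx.
  by have [s] := separating_word (Hcornish i) (H1 i) w nab; exists s.
split=> [i|].
  have [g0 g1] := g01 i; apply: semi_primal_of_bound_separation g0 g1 _ => a b nab.
  by exists (sep (Tagged pairs (a, b)) ++ w); split; [| | exact: sepP].
pose ws := [seq sep p ++ w | p <- enum {: {i : I & (L i * L i)%type}}].
exists (tdiscriminator g (teq_words g ws)) => i; have [g0 g1] := g01 i.
apply: (tdiscriminatorP g0 g1); apply: (teval_teq_words g0 g1) => [c|a b nab].
  exact: all_mapT.
rewrite has_map; apply/hasP; exists (Tagged pairs (a, b)); first exact: mem_enum.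
exact: sepP.
Qed.
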